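(* Let $G=(V,E)$ be a graph with $n=|V|$ and $m=|E|$, and let $k$ be a positive integer. Construct $G'=(V',E')$ as follows: replace each vertex $u\in V$ by a path $u_1u_2u_3$; for each edge $e=uv\in E$ add four new vertices $e_u,e_v,e_w,e_z$ with edges $e_ue_v,e_ve_w,e_we_u,e_we_z$, and add the edges $u_3e_u$ and $v_3e_v$. Let $M=\{u_2u_3:u\in V\}\cup\{e_ue_w:e=uv\in E\}$ (choosing, for each edge $e$, one fixed endpoint labelled $u$). Then $M$ is a maximal matching of $G'$ with $|M|=n+m$, and $G$ has an independent set of at least $k$ vertices (equivalently a vertex cover of at most $n-k$ vertices) if and only if $G'$ has a vertex cover with at most $2|M|-k=2n+2m-k$ vertices.
   Context: A vertex cover of a graph is a set of vertices containing at least one endpoint of every edge. A matching is maximal if no edge of the graph can be added to it while keeping it a matching. *)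

From mathcomp Require Import all_boot.
Set Implicit Arguments. Unset Strict Implicit. Unset Printing Implicit Defensive.

Definition vertex_cover (T : finType) (adj : rel T) (C : {set T}) : Prop :=
  forall x y, adj x y -> (x \in C) || (y \in C).

Definition independent_set (T : finType) (adj : rel T) (S : {set T}) : Prop :=
  forall x y, x \in S -> y \in S -> ~~ adj x y.

(* A matching is a set of edges (stored as pairs) no two distinct of which
   share an endpoint (this also excludes storing both (x,y) and (y,x)). *)
Definition is_matching (T : finType) (adj : rel T) (M : {set T * T}) : Prop :=
  (forall p, p \in M -> adj p.1 p.2) /\
  (forall p q, p \in M -> q \in M -> p != q ->
     [/\ p.1 != q.1, p.1 != q.2, p.2 != q.1 & p.2 != q.2]).

Definition maximal_matching (T : finType) (adj : rel T) (M : {set T * T}) : Prop :=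
  is_matching adj M /\
  (forall x y, adj x y -> (x, y) \notin M -> (y, x) \notin M ->
     ~ is_matching adj (M :|: [set (x, y)])).

(* The input graph G: vertices V, edges E, each edge e having endpoints
   ends e = (u, v); the first component is the fixed endpoint labelled u. *)
Definition simple_graph (V E : finType) (ends : E -> V * V) : Prop :=
  (forall e, (ends e).1 != (ends e).2) /\
  (forall e f, (ends e == ends f) || (ends e == ((ends f).2, (ends f).1)) -> e = f).

Definition adjG (V E : finType) (ends : E -> V * V) : rel V :=
  fun x y => [exists e, (ends e == (x, y)) || (ends e == (y, x))].

(* The constructed graph G'. Vertex u_i is inl (u, i-1) (i = 1,2,3);
   gadget vertices e_u, e_v, e_w, e_z are inr (e,0), inr (e,1), inr (e,2), inr (e,3). *)
Definition Vp (V E : finType) : finType := ((V * 'I_3) + (E * 'I_4))%type.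

Definition o3 (i : nat) (H : i < 3) : 'I_3 := Ordinal H.
Definition o4 (i : nat) (H : i < 4) : 'I_4 := Ordinal H.

Definition baseGp (V E : finType) (ends : E -> V * V) (x y : Vp V E) : bool :=
  match x, y with
  | inl (u, i), inl (u', j) =>
      (u == u') && (((val i == 0) && (val j == 1)) || ((val i == 1) && (val j == 2)))
  | inr (e, i), inr (e', j) =>
      (e == e') && [|| (val i == 0) && (val j == 1), (val i == 1) && (val j == 2),
                       (val i == 2) && (val j == 0) | (val i == 2) && (val j == 3)]
  | inl (x0, i), inr (e, j) =>
      (val i == 2) && (((val j == 0) && (x0 == (ends e).1)) ||
                       ((val j == 1) && (x0 == (ends e).2)))
  | inr _, inl _ => false
  end.

Definition adjGp (V E : finType) (ends : E -> V * V) : rel (Vp V E) :=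
  fun x y => baseGp ends x y || baseGp ends y x.

Definition Mmatch (V E : finType) : {set Vp V E * Vp V E} :=
  [set ((inl (u, @o3 1 isT), inl (u, @o3 2 isT)) : Vp V E * Vp V E) | u : V] :|:
  [set ((inr (e, @o4 0 isT), inr (e, @o4 2 isT)) : Vp V E * Vp V E) | e : E].

From mathcomp Require Import all_boot zify.
Set Implicit Arguments. Unset Strict Implicit. Unset Printing Implicit Defensive.

(* 1. In any graph, S is independent iff its complement is a vertex cover, so
      G has an independent set of size >= k iff it has a cover of size
      <= n - k ([independent_cover_card]).
   2. M saturates u_2, u_3, e_u and e_w, and every edge of G' meets one of
      these vertices; a matching with this property is maximal
      ([saturating_matching_maximal]).
      A cover of G' has a vertex on the edge u_1u_2 of every path and two
      vertices on every triangle e_u e_v e_w.  A cover C of G lifts to a cover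
      of G' of size n + |C| + 2m ([lift_cover]); conversely a cover of G'
      projects to the cover of G formed by its heavy paths and one endpoint
      per heavy gadget, whose size is at most the excess of the cover over
      n + 2m ([project_cover]). *)

Lemma independent_setC (T : finType) (adj : rel T) (S : {set T}) :
  independent_set adj S <-> vertex_cover adj (~: S).
Proof.
split=> [indS x y xy | covS x y xS yS].
  by rewrite !inE; case: (boolP (x \in S)) (boolP (y \in S)) => [xS [yS|]|] //;
     move: (indS x y xS yS); rewrite xy.
by apply/negP => /covS; rewrite !inE xS yS.
Qed.

Lemma independent_cover_card (T : finType) (adj : rel T) (k : nat) :
  (exists S : {set T}, independent_set adj S /\ k <= #|S|) <->
  (exists C : {set T}, vertex_cover adj C /\ #|C| + k <= #|T|).
Proof.
split=> [[S [/independent_setC covS leS]] | [C [covC leC]]].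
  by exists (~: S); split; rewrite // -(cardsC S) addnC leq_add2r.
exists (~: C); split; first by apply/independent_setC; rewrite setCK.
by rewrite -(cardsC C) leq_add2l in leC.
Qed.

(* A matching is maximal as soon as every edge has an endpoint saturated by
   it: adding such an edge would create two edges sharing that endpoint. *)
Lemma saturating_matching_maximal (T : finType) (adj : rel T) (M : {set T * T}) :
  is_matching adj M ->
  (forall x y, adj x y ->
     exists2 p, p \in M & (x \in [:: p.1; p.2]) || (y \in [:: p.1; p.2])) ->
  maximal_matching adj M.
Proof.
move=> matchM satM; split=> // x y xy xyM _ [_ disj].
have [p pM sat] := satM x y xy.
have xyp : (x, y) != p by apply: contraNneq xyM => ->.
have [||x1 x2 y1 y2] := disj (x, y) p _ _ xyp; rewrite ?inE ?eqxx ?pM ?orbT //.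
by move: sat; rewrite !inE (negbTE x1) (negbTE x2) (negbTE y1) (negbTE y2).
Qed.

Lemma card_bool_sum (T : finType) (A : {set T}) : #|A| = \sum_(x : T) (x \in A).
Proof. by rewrite -sum1_card big_mkcond; apply: eq_bigr => x _; case: (x \in A). Qed.

Lemma big_ord3 (f : 'I_3 -> nat) :
  \sum_(i < 3) f i = f (@o3 0 isT) + f (@o3 1 isT) + f (@o3 2 isT).
Proof.
by rewrite !big_ord_recl big_ord0 addn0 addnA; congr (f _ + f _ + f _); apply: val_inj.
Qed.

Lemma big_ord4 (f : 'I_4 -> nat) :
  \sum_(i < 4) f i = f (@o4 0 isT) + f (@o4 1 isT) + f (@o4 2 isT) + f (@o4 3 isT).
Proof.
rewrite !big_ord_recl big_ord0 addn0 !addnA.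
by congr (f _ + f _ + f _ + f _); apply: val_inj.
Qed.

Section Reduction.
Variables (V E : finType) (ends : E -> V * V).

Definition path1 (u : V) : Vp V E := inl (u, @o3 0 isT).
Definition path2 (u : V) : Vp V E := inl (u, @o3 1 isT).
Definition path3 (u : V) : Vp V E := inl (u, @o3 2 isT).
Definition gad_u (e : E) : Vp V E := inr (e, @o4 0 isT).
Definition gad_v (e : E) : Vp V E := inr (e, @o4 1 isT).
Definition gad_w (e : E) : Vp V E := inr (e, @o4 2 isT).
Definition gad_z (e : E) : Vp V E := inr (e, @o4 3 isT).

Definition path_load (A : {set Vp V E}) (u : V) : nat :=
  (path1 u \in A) + (path2 u \in A) + (path3 u \in A).
Definition gadget_load (A : {set Vp V E}) (e : E) : nat :=
  (gad_u e \in A) + (gad_v e \in A) + (gad_w e \in A) + (gad_z e \in A).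

Lemma card_Vp (A : {set Vp V E}) :
  #|A| = \sum_u path_load A u + \sum_e gadget_load A e.
Proof.
rewrite card_bool_sum big_sumType /=; congr (_ + _).
  rewrite (eq_bigr (fun u => \sum_(i < 3) (@inl _ (E * 'I_4) (u, i) \in A))).
    by rewrite pair_bigA; apply: eq_bigr; case.
  by move=> u _; rewrite big_ord3.
rewrite (eq_bigr (fun e => \sum_(j < 4) (@inr (V * 'I_3) _ (e, j) \in A))).
  by rewrite pair_bigA; apply: eq_bigr; case.
by move=> e _; rewrite big_ord4.
Qed.

Definition owner (x : Vp V E) : V + E :=
  match x with inl (u, _) => inl u | inr (e, _) => inr e end.
Definition match_edge (o : V + E) : Vp V E * Vp V E :=
  match o with inl u => (path2 u, path3 u) | inr e => (gad_u e, gad_w e) end.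

Lemma match_edgeM (o : V + E) : match_edge o \in Mmatch V E.
Proof. by case: o => [u|e]; rewrite !inE; apply/orP; [left|right]; apply: imset_f. Qed.

Lemma Mmatch_owner p : p \in Mmatch V E ->
  p = match_edge (owner p.1) /\ p = match_edge (owner p.2).
Proof. by case/setUP => /imsetP [o _ ->]. Qed.

(* Edges of M with different owners are vertex-disjoint. *)
Lemma Mmatch_matching : is_matching (adjGp ends) (Mmatch V E).
Proof.
split=> [p /Mmatch_owner [-> _] | p q /Mmatch_owner [p1 p2] /Mmatch_owner [q1 q2] pq].
  by case: (owner p.1) => [u|e]; rewrite /adjGp /= ?eqxx.
split; apply: contra_neq pq => same.
- by rewrite p1 q1 same.
- by rewrite p1 q2 same.
- by rewrite p2 q1 same.
- by rewrite p2 q2 same.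
Qed.

Definition saturated (x : Vp V E) : bool :=
  match x with
  | inl (_, i) => val i != 0
  | inr (_, j) => (val j == 0) || (val j == 2)
  end.

Lemma saturated_endpoint x : saturated x ->
  x \in [:: (match_edge (owner x)).1; (match_edge (owner x)).2].
Proof.
by case: x => [[u [[|[|[|i]]] Hi]]|[e [[|[|[|[|i]]]] Hi]]] //= _;
   rewrite !inE (bool_irrelevance Hi isT) eqxx ?orbT.
Qed.

Lemma adjGp_saturated x y : adjGp ends x y -> saturated x || saturated y.
Proof.
case: x => [[u [[|[|[|i]]] Hi]]|[e [[|[|[|[|i]]]] Hi]]] //;
case: y => [[u' [[|[|[|i']]] Hi']]|[e' [[|[|[|[|i']]]] Hi']]] //;
by rewrite /adjGp /= ?andbF ?andFb.
Qed.

Lemma Mmatch_maximal : maximal_matching (adjGp ends) (Mmatch V E).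
Proof.
apply: saturating_matching_maximal; first exact: Mmatch_matching.
move=> x y /adjGp_saturated /orP [/saturated_endpoint sx | /saturated_endpoint sy].
  by exists (match_edge (owner x)); rewrite ?match_edgeM ?sx.
by exists (match_edge (owner y)); rewrite ?match_edgeM ?sy ?orbT.
Qed.

Lemma card_Mmatch : #|Mmatch V E| = #|V| + #|E|.
Proof.
rewrite cardsU !card_imset; first last.
- by move=> e e' [].
- by move=> u u' [].
suff -> : [set (path2 u, path3 u) | u : V] :&: [set (gad_u e, gad_w e) | e : E] = set0.
  by rewrite cards0 subn0.
by apply/setP => p; rewrite !inE; apply/andP => [[/imsetP [u _ ->] /imsetP [e _]]].
Qed.

(* Lifting a cover C of G: take every u_2 and e_w, the u_3 with u in C, and in
   the gadget of e = uv the vertex e_u if u is not in C (then v is, so v_3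
   covers e_v v_3) and e_v otherwise. *)
Definition lift_cover (C : {set V}) : {set Vp V E} :=
  [set x | match x with
           | inl (u, i) => (val i == 1) || ((val i == 2) && (u \in C))
           | inr (e, j) => [|| val j == 2, (val j == 0) && ((ends e).1 \notin C)
                             | (val j == 1) && ((ends e).1 \in C)]
           end].

Lemma cover_ends (C : {set V}) e : vertex_cover (adjG ends) C ->
  ((ends e).1 \in C) || ((ends e).2 \in C).
Proof. by move=> covC; apply: covC; apply/existsP; exists e; rewrite -surjective_pairing eqxx. Qed.

(* Each edge of G' is checked directly; the edges u_3 e_u and v_3 e_v use that
   C covers e. *)
Lemma lift_cover_cover (C : {set V}) :
  vertex_cover (adjG ends) C -> vertex_cover (adjGp ends) (lift_cover C).
Proof.
move=> /cover_ends covC.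
suff base x y : baseGp ends x y -> (x \in lift_cover C) || (y \in lift_cover C).
  by move=> x y /orP [/base // | /base]; rewrite orbC.
case: x => [[u [[|[|[|i]]] Hi]]|[e [[|[|[|[|i]]]] Hi]]] //;
case: y => [[u' [[|[|[|i']]] Hi']]|[e' [[|[|[|[|i']]]] Hi']]] //;
rewrite /= !inE /= ?andbF ?andbT ?orbF ?orbT //.
all: try by move/eqP => ->; case: (_ \in C).
all: try by move=> /eqP ->; rewrite covC.
by move=> /eqP ->; rewrite orbC covC.
Qed.

(* One or two vertices per path, exactly two per gadget. *)
Lemma card_lift_cover (C : {set V}) : #|lift_cover C| = #|V| + #|C| + 2 * #|E|.
Proof.
have pathE u : path_load (lift_cover C) u = 1 + (u \in C).
  by rewrite /path_load !inE /=; case: (u \in C).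
have gadgetE e : gadget_load (lift_cover C) e = 2.
  by rewrite /gadget_load !inE /=; case: (_ \in C).
rewrite card_Vp (eq_bigr _ (fun u _ => pathE u)) (eq_bigr _ (fun e _ => gadgetE e)).
by rewrite big_split /= !sum_nat_const card_bool_sum !muln1 mulnC.
Qed.

(* Counting facts behind the projection: a cover of G' has one vertex on each
   path plus one more if it is heavy (at least two), two vertices on each
   triangle e_u e_v e_w plus one more if the gadget is heavy (at least three),
   and a gadget with at most two vertices forces a heavy path at an end. *)
Lemma path_cover_count (a b c : bool) : a || b -> 1 + (2 <= a + b + c) <= a + b + c.
Proof. by case: a; case: b; case: c. Qed.

Lemma triangle_cover_count (a b c d : bool) : a || b -> b || c -> c || a ->
  2 + (3 <= a + b + c + d) <= a + b + c + d.
Proof. by case: a; case: b; case: c; case: d. Qed.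

Lemma light_gadget_count (u1 u2 u3 v1 v2 v3 cu cv cw cz : bool) :
  u1 || u2 -> u2 || u3 -> v1 || v2 -> v2 || v3 ->
  cu || cv -> cv || cw -> cw || cu -> cw || cz -> u3 || cu -> v3 || cv ->
  cu + cv + cw + cz < 3 -> (2 <= u1 + u2 + u3) || (2 <= v1 + v2 + v3).
Proof.
by case: u1; case: u2; case: u3; case: v1; case: v2; case: v3;
   case: cu; case: cv; case: cw; case: cz.
Qed.

Section Projection.
Variable Cq : {set Vp V E}.
Hypothesis covCq : vertex_cover (adjGp ends) Cq.

(* Paths and gadgets holding more vertices of Cq than the minimum forced. *)
Definition heavy_paths : {set V} := [set u | 2 <= path_load Cq u].
Definition heavy_gadgets : {set E} := [set e | 3 <= gadget_load Cq e].

Definition project_cover : {set V} :=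
  heavy_paths :|: [set (ends e).1 | e in heavy_gadgets].

(* Cq covers u_1 u_2, so a path carries one vertex, two if heavy. *)
Lemma path_load_cover u : 1 + (u \in heavy_paths) <= path_load Cq u.
Proof. by rewrite inE; apply: path_cover_count; apply: covCq; rewrite /adjGp /= eqxx. Qed.

(* Cq covers the triangle, so a gadget carries two vertices, three if heavy. *)
Lemma gadget_load_cover e : 2 + (e \in heavy_gadgets) <= gadget_load Cq e.
Proof.
by rewrite inE; apply: triangle_cover_count; apply: covCq; rewrite /adjGp /= eqxx ?orbT.
Qed.

Lemma light_gadget_heavy_end e : e \notin heavy_gadgets ->
  ((ends e).1 \in heavy_paths) || ((ends e).2 \in heavy_paths).
Proof.
rewrite !inE -ltnNge => light.
by apply: light_gadget_count light; apply: covCq; rewrite /adjGp /= ?eqxx ?orbT.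
Qed.

(* Heavy gadgets contribute an endpoint of their edge, light ones force a
   heavy endpoint. *)
Lemma project_cover_cover : vertex_cover (adjG ends) project_cover.
Proof.
suff endsC e : ((ends e).1 \in project_cover) || ((ends e).2 \in project_cover).
  by move=> x y /existsP [e /orP [] /eqP ends_e]; move: (endsC e);
     rewrite ends_e // orbC.
have [heavy | /light_gadget_heavy_end] := boolP (e \in heavy_gadgets).
  by rewrite /project_cover inE (imset_f (fun e => (ends e).1) heavy) orbT.
by rewrite !inE; case/orP => ->; rewrite ?orbT.
Qed.

(* |Cq| >= (n + #heavy paths) + (2m + #heavy gadgets) >= n + |project| + 2m. *)
Lemma card_project_cover : #|V| + #|project_cover| + 2 * #|E| <= #|Cq|.
Proof.
have le_proj : #|project_cover| <= #|heavy_paths| + #|heavy_gadgets|.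
  by apply: leq_trans (leq_card_setU _ _) _; rewrite leq_add2l leq_imset_card.
have pathsB : #|V| + #|heavy_paths| <= \sum_u path_load Cq u.
  rewrite card_bool_sum -sum1_card -big_split; exact: leq_sum (fun u _ => path_load_cover u).
have gadgetsB : 2 * #|E| + #|heavy_gadgets| <= \sum_e gadget_load Cq e.
  rewrite card_bool_sum -sum1_card big_distrr -big_split /=.
  by apply: leq_sum => e _; rewrite muln1 gadget_load_cover.
rewrite card_Vp; lia.
Qed.

End Projection.
End Reduction.

Theorem mainTheorem10 (V E : finType) (ends : E -> V * V) (k : nat) :
  simple_graph ends -> 0 < k ->
  [/\ maximal_matching (adjGp ends) (Mmatch V E),
      #|Mmatch V E| = #|V| + #|E|,
      (exists S : {set V}, independent_set (adjG ends) S /\ k <= #|S|) <->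
      (exists C : {set V}, vertex_cover (adjG ends) C /\ #|C| + k <= #|V|)
    & (exists S : {set V}, independent_set (adjG ends) S /\ k <= #|S|) <->
      (exists C : {set Vp V E}, vertex_cover (adjGp ends) C /\
                                #|C| + k <= 2 * #|Mmatch V E|)].
Proof.
move=> _ _; have indep_cover := independent_cover_card (adjG ends) k.
split; [exact: Mmatch_maximal | exact: card_Mmatch | exact: indep_cover | ].
rewrite card_Mmatch indep_cover; split=> [[C [covC smallC]] | [Cq [covCq smallCq]]].
  exists (lift_cover ends C); split; first exact: lift_cover_cover.
  by rewrite card_lift_cover; lia.
exists (project_cover ends Cq); split; first exact: project_cover_cover.
by have := card_project_cover covCq; lia.
Qed.
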